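(* Let $n\ge1$, $k\ge1$, and let $((i_1\,j_1),\dots,(i_k\,j_k))\in(\mathsf T_n)^k$ (with $i_l<j_l$ for all $l$) satisfy $i_1\le i_2\le\dots\le i_k$. The following are equivalent: 1. $((i_1\,j_1),\dots,(i_k\,j_k))\in\Sigma_n(k)$. 2. For all $l,m\in\{1,\dots,k\}$ with $l<m$, either $j_l\le i_m$ or $j_l>j_m$.
   Context: Let $n\ge1$. $\mathfrak S_n$ is the symmetric group on $\{1,\dots,n\}$; products of permutations are composed from right to left. $\mathsf T_n$ denotes the set of transpositions; a transposition is always written $(i\,j)$ with $i<j$. For $\sigma\in\mathfrak S_n$, $\ell(\sigma)$ is the number of cycles of $\sigma$ (fixed points counted) and $|\sigma|=n-\ell(\sigma)$. Write $\sigma_1\preccurlyeq\sigma_2$ iff $|\sigma_2|=|\sigma_1|+|\sigma_1^{-1}\sigma_2|$. For $k\ge0$, $\Sigma_n(k)=\{(\tau_1,\dots,\tau_k)\in(\mathsf T_n)^k : |\tau_1\cdots\tau_k|=k,\ \tau_1\cdots\tau_k\preccurlyeq(1\,2\,\dots\,n)\}$. *)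

(* Points {1..n} are represented by 'I_n = {0..n-1} (shift by 1). *)
From HB Require Import structures.
From mathcomp Require Import all_boot all_order all_fingroup.
Set Implicit Arguments. Unset Strict Implicit. Unset Printing Implicit Defensive.
Local Open Scope group_scope.

Definition pabs n (s : 'S_n) : nat := (n - #|porbits s|)%N.

(* Paper composes right to left: (s1 s2)(x) = s1 (s2 x).  In MathComp,
   (s * t) x = t (s x), so paper's s1 s2 is MathComp's s2 * s1. *)
Definition pcomp n (s1 s2 : 'S_n) : 'S_n := s2 * s1.

Definition pprec n (s1 s2 : 'S_n) : bool :=
  pabs s2 == (pabs s1 + pabs (pcomp s1^-1 s2))%N.

Definition rprod n (s : seq 'S_n) : 'S_n := foldr (@pcomp n) 1 s.

(* the long cycle (1 2 ... n): i |-> i+1 mod n *)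
Definition long_cycle n : 'S_n := perm (can_inj (@ordSK n)).

Definition inSigma n (ts : seq 'S_n) : bool :=
  (pabs (rprod ts) == size ts) && pprec (rprod ts) (long_cycle n).

From Stdlib Require Import Lia.
From Pilot Require Import Defs.
From HB Require Import structures.
From mathcomp Require Import all_boot all_order all_fingroup zify.

Set Implicit Arguments. Unset Strict Implicit. Unset Printing Implicit Defensive.

(* Let P_m = t_1 ... t_m and Q_m = P_m^-1 c, with c the long cycle.  Since
   |c| = n - 1, membership in Sigma_n(k) means that P_k has n - k cycles and
   Q_k has k + 1 cycles.  Multiplying a permutation by a transposition (a b)
   splits a cycle if a and b lie in the same cycle and merges two cycles
   otherwise; as Q_0 = c has one cycle and Q_m+1 = Q_m t_m+1, Q_k has k + 1
   cycles exactly when every step splits.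
   As long as the condition holds for the first m transpositions, the cycles
   of Q_m are the classes of points lying in the same intervals [i_l, j_l),
   l <= m, each traversed in cyclic order; because the i_l are sorted, i_m+1
   and j_m+1 lie in the same class exactly when the condition extends to
   m + 1.  Under the condition j_m+1 is moreover fixed by P_m, so every step
   merges two cycles of P_m. *)

Lemma rprod_rcons n (s : seq 'S_n) t : rprod (rcons s t) = (t * rprod s)%g.
Proof.
elim: s => [|x s IH]; first by rewrite /rprod /= /Defs.pcomp mul1g mulg1.
by rewrite rcons_cons /rprod /= -/(rprod _) IH /Defs.pcomp mulgA.
Qed.

Lemma porbit_fixed (T : finType) (s : {perm T}) x y :
  s x = x -> y \in porbit s x -> y = x.
Proof. by move=> sx /porbitP[i ->]; rewrite permX_fix. Qed.

Lemma card_porbits_le n (s : 'S_n) : #|porbits s| <= n.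
Proof. by rewrite /porbits (leq_trans (leq_imset_card _ _)) // card_ord. Qed.

Lemma card_porbits1 n : #|porbits (1 : 'S_n)| = n.
Proof.
rewrite /porbits card_imset ?card_ord // => x y Exy.
have : y \in porbit 1 x by rewrite Exy porbit_id.
by move/(porbit_fixed (perm1 x)) ->.
Qed.

Lemma card_porbits_mul_tperml n (s : 'S_n) x y : x != y ->
  #|porbits (tperm x y * s)| + (x \notin porbit s y).*2 = #|porbits s| + 1.
Proof. by move=> neq_xy; rewrite porbits_mul_tperm neq_xy. Qed.

Lemma card_porbits_mul_tpermr n (s : 'S_n) x y : x != y ->
  #|porbits (s * tperm x y)| + (x \notin porbit s y).*2 = #|porbits s| + 1.
Proof.
move=> neq_xy; rewrite -porbitsV invMg tpermV.
by have := card_porbits_mul_tperml s^-1 neq_xy; rewrite porbitsV porbitV.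
Qed.

Lemma long_cycleX n (x : 'I_n) i : val ((long_cycle n ^+ i)%g x) = (x + i) %% n.
Proof.
elim: i => [|i IH]; first by rewrite expg0 perm1 addn0 modn_small.
rewrite expgSr permM /long_cycle permE /= IH.
by rewrite addnS -[(x + i).+1]addn1 -[((x + i) %% n).+1]addn1 modnDml.
Qed.

Lemma card_porbits_long_cycle n : 0 < n -> #|porbits (long_cycle n)| = 1.
Proof.
move=> n_gt0; have orbitT (x : 'I_n) : porbit (long_cycle n) x = setT.
  apply/setP=> y; rewrite inE; apply/porbitP; exists (y + n - x).
  apply: val_inj; rewrite long_cycleX.
  have -> : x + (y + n - x) = y + n by have := ltn_ord x; lia.
  by rewrite modnDr modn_small.
have -> : porbits (long_cycle n) = [set setT].
  apply/setP=> S; rewrite inE; apply/imsetP/eqP => [[x _ ->]|->].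
    by rewrite orbitT.
  by exists (Ordinal n_gt0); rewrite ?orbitT.
by rewrite cards1.
Qed.

(* The number of steps of i |-> i + 1 (mod n) leading from x to y, in the
   range [1, n]: a full turn, n, when y = x. *)
Definition cdist n (x y : nat) := if x < y then y - x else y + n - x.

Ltac cdist_cases := rewrite /cdist;
  repeat match goal with |- context[if ?a < ?b then _ else _] => case: (ltnP a b) end;
  lia.

Section CyclicDistance.
Variable n : nat.
Implicit Types x y z : nat.

Lemma cdist_gt0 x y : x < n -> 0 < cdist n x y. Proof. cdist_cases. Qed.

Lemma cdistxx x : cdist n x x = n. Proof. cdist_cases. Qed.

Lemma cdist_ltn x y : x < n -> y < n -> x != y -> cdist n x y < n.
Proof. cdist_cases. Qed.

Lemma cdist_inj x y z : x < n -> y < n -> z < n ->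
  cdist n x y = cdist n x z -> y = z.
Proof. cdist_cases. Qed.

Lemma cdist_shift x x' y : x < n -> x' < n -> y < n -> x != x' ->
  cdist n x x' < cdist n x y -> cdist n x' y < cdist n x y.
Proof. cdist_cases. Qed.

Section Interval.
Variables a b x : nat.
Hypotheses (lt_ab : a < b) (lt_bn : b < n) (lt_xn : x < n).

Lemma cdist_end_lt_start_in : a <= x < b -> cdist n x b < cdist n x a.
Proof. cdist_cases. Qed.

Lemma cdist_start_lt_end_out : (x < a) || (b <= x) -> cdist n x a < cdist n x b.
Proof. cdist_cases. Qed.

Lemma cdist_end_lt_out_in y : y < n -> a <= x < b -> (y < a) || (b < y) ->
  cdist n x b < cdist n x y.
Proof. cdist_cases. Qed.

Lemma cdist_start_lt_in_out y : y < n -> (x < a) || (b <= x) -> a < y < b ->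
  cdist n x a < cdist n x y.
Proof. cdist_cases. Qed.

Lemma cdist_between_ends_out z : z < n -> (x < a) || (b <= x) ->
  cdist n x a < cdist n x z -> cdist n x z < cdist n x b -> a < z < b.
Proof. cdist_cases. Qed.

Lemma cdist_between_ends_in z : z < n -> a <= x < b ->
  cdist n x b < cdist n x z -> cdist n x z < cdist n x a -> (z < a) || (b < z).
Proof. cdist_cases. Qed.

End Interval.
End CyclicDistance.

Lemma cdist_long_cycle n (x : 'I_n) : cdist n x (long_cycle n x) = 1.
Proof.
have hx := ltn_ord x.
have -> : val (long_cycle n x) = (x + 1) %% n by rewrite -long_cycleX expg1.
case: (ltnP x.+1 n) => h; first by rewrite modn_small; cdist_cases.
have -> : x + 1 = n by lia.
by rewrite modnn; cdist_cases.
Qed.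

Section PrefixProducts.
Variables (n k : nat) (A B : nat -> 'I_n).
Hypothesis ltAB : forall l, l < k -> A l < B l.
Hypothesis leA : forall l m, l <= m -> m < k -> A l <= A m.

Definition tau l : 'S_n := tperm (A l) (B l).

Definition prefix m : 'S_n := rprod [seq tau l | l <- iota 0 m].

(* The paper's P_m^-1 c: in 'S_n, (s * t) x = t (s x). *)
Definition kreweras m : 'S_n := (long_cycle n * (prefix m)^-1)%g.

Definition noncrossing m :=
  forall l m', l < m' -> m' < m -> B l <= A m' \/ B m' < B l.

Definition in_arc l (x : nat) := A l <= x < B l.

Definition arc_equiv m (x y : nat) := forall l, l < m -> in_arc l x = in_arc l y.

Definition first_after m (x y : 'I_n) := arc_equiv m x y /\
  forall z : 'I_n, cdist n x z < cdist n x y -> ~ arc_equiv m x z.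

Definition next_in_class m := forall x, first_after m x (kreweras m x).

Lemma prefix0 : prefix 0 = 1%g.
Proof. by []. Qed.

Lemma prefixS m : prefix m.+1 = (tau m * prefix m)%g.
Proof. by rewrite /prefix -addn1 iotaD add0n cats1 map_rcons rprod_rcons. Qed.

Lemma kreweras0 : kreweras 0 = long_cycle n.
Proof. by rewrite /kreweras prefix0 invg1 mulg1. Qed.

Lemma krewerasS m : kreweras m.+1 = (kreweras m * tau m)%g.
Proof. by rewrite /kreweras prefixS invMg /tau tpermV mulgA. Qed.

Lemma noncrossingW m : noncrossing m.+1 -> noncrossing m.
Proof. by move=> nc l m' lm' m'm; apply: nc lm' (ltnW m'm). Qed.

Lemma neq_AB m : m < k -> A m != B m.
Proof. by move=> mk; rewrite -val_eqE /= ltn_eqF ?ltAB. Qed.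

Lemma prefix_fix_B m : m < k -> noncrossing m.+1 ->
  forall j, j <= m -> prefix j (B m) = B m.
Proof.
move=> mk nc; elim=> [|j IH] jm; first by rewrite prefix0 perm1.
have := leA (ltnW jm) mk; have := ltAB mk; have := nc j m jm (ltnSn m).
rewrite prefixS permM /tau => ? ? ?.
by rewrite tpermD ?IH ?(ltnW jm) // -val_eqE /=; lia.
Qed.

Lemma card_porbits_prefix m : m <= k -> noncrossing m ->
  #|porbits (prefix m)| + m = n.
Proof.
elim: m => [|m IH] mk nc; first by rewrite prefix0 card_porbits1 addn0.
have := card_porbits_mul_tperml (prefix m) (neq_AB mk).
have -> : A m \notin porbit (prefix m) (B m).
  apply/negP => /(porbit_fixed (prefix_fix_B mk nc (leqnn m))) eq_AB.
  by have := ltAB mk; rewrite eq_AB ltnn.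
rewrite /= -addnn -/(tau m) -prefixS.
have := IH (ltnW mk) (noncrossingW nc).
(* [set] identifies two differently elaborated copies of this cardinal, which
   [lia] would otherwise treat as distinct atoms. *)
by set p := #|porbits (prefix m)|; lia.
Qed.

Lemma card_porbits_krewerasS m : m < k ->
  #|porbits (kreweras m.+1)| + (A m \notin porbit (kreweras m) (B m)).*2 =
  #|porbits (kreweras m)| + 1.
Proof. by move=> mk; rewrite krewerasS card_porbits_mul_tpermr ?neq_AB. Qed.

Lemma card_porbits_kreweras_le m : 0 < n -> m <= k ->
  #|porbits (kreweras m)| <= m.+1.
Proof.
move=> n_gt0; elim: m => [|m IH] mk.
  by rewrite kreweras0 card_porbits_long_cycle.
have := card_porbits_krewerasS mk; have := IH (ltnW mk).
by case: (_ \notin _); rewrite /= -addnn; lia.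
Qed.

Lemma arc_equiv_sym m x y : arc_equiv m x y -> arc_equiv m y x.
Proof. by move=> exy l lm; rewrite exy. Qed.

Lemma arc_equiv_trans m x y z :
  arc_equiv m x y -> arc_equiv m y z -> arc_equiv m x z.
Proof. by move=> exy eyz l lm; rewrite exy ?eyz. Qed.

Lemma arc_equivS m x y :
  arc_equiv m.+1 x y <-> arc_equiv m x y /\ in_arc m x = in_arc m y.
Proof.
split=> [exy|[exy exym] l].
  by split; [move=> l lm; apply: exy; apply: ltnW | apply: exy].
by rewrite ltnS leq_eqVlt => /orP[/eqP->//|]; apply: exy.
Qed.

(* Sortedness of the A l and the condition make [A m, B m] lie inside or
   outside each earlier interval. *)
Lemma arc_equiv_start m : m < k -> noncrossing m.+1 ->
  forall z, A m <= z <= B m -> arc_equiv m (A m) z.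
Proof.
move=> mk nc z hz l lm; rewrite /in_arc.
have := nc l m lm (ltnSn m); have := leA (ltnW lm) mk.
by move=> ? ?; apply/idP/idP; lia.
Qed.

Lemma next_in_class0 : next_in_class 0.
Proof.
move=> x; rewrite kreweras0; split=> [l //|z]; rewrite cdist_long_cycle.
by have := cdist_gt0 z (ltn_ord x); lia.
Qed.

Section NextInClassStep.
Variable m : nat.
Hypotheses (mk : m < k) (nc : noncrossing m.+1) (next : next_in_class m).

Let lt_ab : A m < B m := ltAB mk.
Let lt_bn : B m < n := ltn_ord (B m).
Let equiv_ab : arc_equiv m (A m) (B m).
Proof. by apply: arc_equiv_start => //; rewrite leqnn andbT ltnW. Qed.

Lemma first_afterS_start x :
  kreweras m x = A m -> first_after m.+1 x (B m).
Proof.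
move=> Qx; have [ex_a min_a] := next x; rewrite Qx in ex_a min_a.
have hx := ltn_ord x.
have ex_b : arc_equiv m x (B m) := arc_equiv_trans ex_a equiv_ab.
have x_out : ~~ in_arc m x.
  by apply/negP => x_in; apply: (min_a (B m)) ex_b; apply: cdist_end_lt_start_in.
split; first by apply/arc_equivS; split; rewrite // (negbTE x_out) /in_arc ltnn andbF.
move=> z dz /arc_equivS [exz]; rewrite (negbTE x_out) /in_arc => z_out.
have hz := ltn_ord z.
case: (ltngtP (cdist n x z) (cdist n x (A m))) => dza.
- exact: (min_a z dza exz).
- have x_out' : (x < A m) || (B m <= x) by move: x_out; rewrite /in_arc; lia.
  have := cdist_between_ends_out lt_ab lt_bn hx hz x_out' dza dz.
  by move: z_out; lia.
- by move: z_out; rewrite (cdist_inj hx hz (ltn_ord (A m)) dza) leqnn lt_ab.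
Qed.

Lemma first_afterS_end x :
  kreweras m x = B m -> first_after m.+1 x (A m).
Proof.
move=> Qx; have [ex_b min_b] := next x; rewrite Qx in ex_b min_b.
have hx := ltn_ord x.
have ex_a : arc_equiv m x (A m) := arc_equiv_trans ex_b (arc_equiv_sym equiv_ab).
have x_in : in_arc m x.
  apply/negPn/negP => x_out; apply: (min_b (A m)) ex_a.
  by apply: cdist_start_lt_end_out => //; move: x_out; rewrite /in_arc; lia.
split; first by apply/arc_equivS; split; rewrite // x_in /in_arc leqnn lt_ab.
move=> z dz /arc_equivS [exz]; rewrite x_in /in_arc => z_in.
have hz := ltn_ord z.
case: (ltngtP (cdist n x z) (cdist n x (B m))) => dzb.
- exact: (min_b z dzb exz).
- have := cdist_between_ends_in lt_ab lt_bn hx hz x_in dzb dz.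
  by move: z_in; lia.
- by move: z_in; rewrite (cdist_inj hx hz (ltn_ord (B m)) dzb) ltnn andbF.
Qed.

Lemma first_afterS_other x : kreweras m x != A m -> kreweras m x != B m ->
  first_after m.+1 x (kreweras m x).
Proof.
rewrite -!val_eqE /= => ya yb; have [ex_y min_y] := next x.
have hx := ltn_ord x; have hy := ltn_ord (kreweras m x).
split; last by move=> z dz /arc_equivS [exz _]; apply: min_y dz exz.
apply/arc_equivS; split=> //; rewrite /in_arc.
case: (boolP (A m <= x < B m)) => x_in; case: (boolP (A m <= kreweras m x < B m)) => y_in //.
- exfalso; apply: (min_y (B m)).
    by apply: (@cdist_end_lt_out_in n (A m)) => //; lia.
  by apply: arc_equiv_trans (arc_equiv_sym _) equiv_ab; apply: arc_equiv_start => //; lia.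
- exfalso; apply: (min_y (A m)).
    by apply: (@cdist_start_lt_in_out n (A m) (B m)) => //; lia.
  apply: arc_equiv_trans ex_y (arc_equiv_sym _).
  by apply: arc_equiv_start => //; lia.
Qed.

Lemma next_in_classS : next_in_class m.+1.
Proof.
move=> x; rewrite krewerasS permM /tau.
case: tpermP => [ya|yb|/eqP ya /eqP yb].
- exact: first_afterS_start.
- exact: first_afterS_end.
- exact: first_afterS_other.
Qed.

End NextInClassStep.

Lemma next_in_class_noncrossing m : m <= k -> noncrossing m -> next_in_class m.
Proof.
elim: m => [|m IH] mk nc; first exact: next_in_class0.
exact: next_in_classS (IH (ltnW mk) (noncrossingW nc)).
Qed.

Lemma arc_equiv_porbit m : next_in_class m ->
  forall x y : 'I_n, y \in porbit (kreweras m) x -> arc_equiv m x y.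
Proof.
move=> next x y /porbitP[i ->]; elim: i => [|i IH]; first by rewrite expg0 perm1.
by rewrite expgSr permM; apply: arc_equiv_trans IH (next _).1.
Qed.

(* Induction on the cyclic distance from x to y: stepping from x to its image
   under kreweras m brings y strictly closer. *)
Lemma porbit_arc_equiv m : next_in_class m ->
  forall x y : 'I_n, arc_equiv m x y -> y \in porbit (kreweras m) x.
Proof.
move=> next; suff: forall d (x y : 'I_n), cdist n x y <= d ->
    arc_equiv m x y -> y \in porbit (kreweras m) x by move=> H x y; apply: H.
elim=> [|d IH] x y dxy exy; first by have := cdist_gt0 y (ltn_ord x); lia.
have [->|neq_xy] := eqVneq x y; first exact: porbit_id.
set x' := kreweras m x.
have [<-|neq_x'y] := eqVneq x' y.
  by have := mem_porbit (kreweras m) 1 x; rewrite expg1.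
have [ex_x' min_x'] := next x.
have hx := ltn_ord x; have hy := ltn_ord y; have hx' := ltn_ord x'.
have lt_x'y : cdist n x x' < cdist n x y.
  case: (ltngtP (cdist n x x') (cdist n x y)) => // [/min_x'//|].
  by move=> /(cdist_inj hx hx' hy) /val_inj E; rewrite E eqxx in neq_x'y.
have neq_xx' : (x : nat) != x'.
  apply/eqP => E; move: lt_x'y; rewrite -E cdistxx.
  by have := cdist_ltn hx hy neq_xy; lia.
have := cdist_shift hx hx' hy neq_xx' lt_x'y.
have -> : porbit (kreweras m) x = porbit (kreweras m) x'.
  by have := porbit_perm (kreweras m) 1 x; rewrite expg1.
move=> lt_d; apply: IH; last exact: arc_equiv_trans (arc_equiv_sym ex_x') exy.
by lia.
Qed.

Lemma noncrossingS m : m < k -> noncrossing m ->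
  noncrossing m.+1 <-> arc_equiv m (A m) (B m).
Proof.
move=> mk nc; split=> [nc' l lm | eq_ab l m' lm'].
  by apply: arc_equiv_start => //; rewrite leqnn andbT ltnW ?ltAB.
rewrite ltnS leq_eqVlt => /orP[/eqP E|]; last exact: nc. subst m'.
have := eq_ab l lm'; rewrite /in_arc leA ?(ltnW lm') //.
case: (leqP (B l) (A m)) => [|_] /= E; first by left.
by right; move/esym/andP: E => [].
Qed.

Lemma card_porbits_kreweras m : 0 < n -> m <= k ->
  #|porbits (kreweras m)| = m.+1 <-> noncrossing m.
Proof.
move=> n_gt0; elim: m => [|m IH] mk.
  by rewrite kreweras0 card_porbits_long_cycle //; split=> // _ l m' _; rewrite ltn0.
have := card_porbits_krewerasS mk; have := card_porbits_kreweras_le n_gt0 (ltnW mk).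
set q := #|porbits (kreweras m)|; set q' := #|porbits (kreweras m.+1)|.
have nextE nc := next_in_class_noncrossing (ltnW mk) nc.
case: (boolP (A m \notin porbit (kreweras m) (B m))) => [a_out|/negPn a_in];
  rewrite /= -addnn => le_q card_q'.
- split=> [|nc]; first by lia.
  have ncm := noncrossingW nc.
  case/negP: a_out; rewrite porbit_sym.
  exact/(porbit_arc_equiv (nextE ncm))/(noncrossingS mk ncm).
- split=> [card_m1|nc].
    have ncm : noncrossing m by apply/IH; [exact: ltnW | lia].
    apply/(noncrossingS mk ncm)/arc_equiv_sym.
    exact: (arc_equiv_porbit (nextE ncm)).
  by have := (IH (ltnW mk)).2 (noncrossingW nc); lia.
Qed.

Lemma inSigma_tau : 0 < n -> inSigma [seq tau l | l <- iota 0 k] <-> noncrossing k.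
Proof.
move=> n_gt0; rewrite /inSigma /pprec /pabs /Defs.pcomp size_map size_iota.
rewrite -/(prefix k) -/(kreweras k) card_porbits_long_cycle //.
have card_qE := card_porbits_kreweras n_gt0 (leqnn k).
have := card_porbits_le (prefix k); have := card_porbits_le (kreweras k).
move=> le_q le_p; split=> [/andP[/eqP card_P /eqP card_Q]|nc].
  by apply/card_qE; lia.
have := card_porbits_prefix (leqnn k) nc; have := card_qE.2 nc.
by move=> ? ?; apply/andP; split; apply/eqP; lia.
Qed.

End PrefixProducts.

Theorem proposition3p5 (n k : nat) (hn : (1 <= n)%N) (hk : (1 <= k)%N)
    (I J : 'I_k -> 'I_n)
    (hIJ : forall l : 'I_k, (I l < J l)%N)
    (hsort : forall l m : 'I_k, (l <= m)%N -> (I l <= I m)%N) :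
  inSigma [seq tperm (I l) (J l) | l <- enum 'I_k] <->
  (forall l m : 'I_k, (l < m)%N -> (J l <= I m)%N \/ (J m < J l)%N).
Proof.
pose A l := I (insubd (Ordinal hk) l); pose B l := J (insubd (Ordinal hk) l).
have AE (l : 'I_k) : A l = I l by rewrite /A valKd.
have BE (l : 'I_k) : B l = J l by rewrite /B valKd.
have ltAB l : l < k -> A l < B l by move=> _; apply: hIJ.
have leA l m : l <= m -> m < k -> A l <= A m.
  by move=> lm mk; apply: hsort; rewrite !val_insubd (leq_ltn_trans lm mk) mk.
have -> : [seq tperm (I l) (J l) | l <- enum 'I_k] = [seq tau A B l | l <- iota 0 k].
  by rewrite -val_enum_ord -map_comp; apply: eq_map => l /=; rewrite /tau AE BE.
rewrite (inSigma_tau ltAB leA hn).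
split=> [nc l m lm|nc l m lm mk]; first by rewrite -!AE -!BE; apply: nc.
by have := nc (Ordinal (ltn_trans lm mk)) (Ordinal mk) lm; rewrite -!AE -!BE.
Qed.
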